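(* Let $c\in(0,1)$ and $t\in\mathbb{N}$. There exist $n_0$ and $C>0$ depending on $c$ and $t$ such that for all $n\ge n_0$: if $\mathcal{F}\subseteq\mathcal{M}_{2n}$ is a $t$-intersecting family with $|\mathcal{F}|\ge c(2(n-t)-1)!!$, then there is a set $T$ of $t$ pairwise disjoint edges of $K_{2n}$ such that \[|\mathcal{F}\setminus\mathcal{F}\!\downarrow_T| \le C\,(2(n-t-1)-1)!!,\] i.e. $|\mathcal{F}\setminus\mathcal{F}\!\downarrow_T| = O((2(n-t-1)-1)!!)$.
   Context: $\mathcal{M}_{2n}$ is the set of perfect matchings of $K_{2n}$. A family $\mathcal{F}$ is $t$-intersecting if $|m\cap m'|\ge t$ for all $m,m'\in\mathcal{F}$. For a set $S$ of disjoint edges, $\mathcal{F}\!\downarrow_S=\{m\in\mathcal{F}: S\subseteq m\}$. $(2k-1)!!=1\cdot3\cdots(2k-1)$. *)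

From mathcomp Require Import all_boot all_order all_algebra.
From mathcomp Require Export reals.
Set Implicit Arguments. Unset Strict Implicit. Unset Printing Implicit Defensive.

(* Vertices of K_{2n}: 'I_(2n).  An edge is a 2-element subset of vertices. *)
Definition edge (V : finType) (e : {set V}) : bool := #|e| == 2.

Definition perfect_matching (V : finType) (m : {set {set V}}) : bool :=
  [forall e in m, edge e] && partition m [set: V].

Definition disjoint_edges (V : finType) (S : {set {set V}}) : bool :=
  [forall e in S, edge e] && trivIset S.

Definition t_intersecting (V : finType) (t : nat) (F : {set {set {set V}}}) : bool :=
  [forall m in F, forall m' in F, t <= #|m :&: m'|].

Definition restrict (V : finType) (F : {set {set {set V}}}) (S : {set {set V}}) :=
  [set m in F | S \subset m].

(* dfo k = (2k-1)!! = 1 * 3 * ... * (2k-1); dfo 0 = 1 = (-1)!!. *)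
Definition dfo (k : nat) : nat := \prod_(i < k) (2 * i + 1).

(* Spread approximation.  A set S of edges maximizing (2/3)^|S| times the
   density of F|S among the perfect matchings through S makes F|S spread: no
   edge outside S lies in more than 3/2 times its expected share of F|S, so F|S
   has no small transversal.  Peeling off such pieces covers F up to fewer than
   (2(n-t-1)-1)!! matchings, and every support S has size O(log n).  If two
   supports S1, S2 shared fewer than t edges, some matching a of the first piece
   would avoid S2 \ S1, and then, F being t-intersecting, the at most n edges of
   a \ S2 would be a transversal of the second piece.  So the supports pairwise
   share t edges.  If they all contain a common t-set T, F \ F|T is uncovered;
   otherwise every covered matching contains a t-subset of one fixed support and
   one more edge of another support, so |F| = O(log^(t+1) n) (2(n-t-1)-1)!!,
   which is below c (2(n-t)-1)!! for large n. *)

From mathcomp Require Import all_boot all_order all_algebra reals zify ring.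
Set Implicit Arguments. Unset Strict Implicit. Unset Printing Implicit Defensive.

Lemma leq_expn2r m1 m2 e : m1 <= m2 -> m1 ^ e <= m2 ^ e.
Proof. by case: e => // e; rewrite leq_exp2r. Qed.

Lemma leq_exp_addn1 s e : s ^ e.+1 + 1 <= (s + 1) ^ e.+1.
Proof.
rewrite expnSr [leqRHS]expnSr mulnDr muln1.
by rewrite leq_add ?leq_mul2r ?leq_expn2r ?leq_addr ?orbT // expn_gt0 addn1.
Qed.

Lemma bin_leq_exp m k : 'C(m, k) <= m ^ k.
Proof.
apply: leq_trans (leq_pmulr _ (fact_gt0 k)) _; rewrite bin_ffact ffact_prod.
by rewrite -[k in _ ^ k]card_ord -prod_nat_const leq_prod // => i _; apply: leq_subr.
Qed.

Lemma bin_exp2_leq_exp3 s j : 'C(s, j) * 2 ^ (s - j) <= 3 ^ s.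
Proof.
case: (leqP j s) => js; last by rewrite bin_small // mul0n.
rewrite -[3]/(2 + 1) expnDn (bigD1 (Ordinal (_ : j < s.+1))) //= exp1n muln1.
exact: leq_addr.
Qed.

Lemma poly_exp2_leq_exp3 e s : (s + 1) ^ e * 2 ^ s <= e`! * 3 ^ e * 3 ^ s.
Proof.
have ffact_ge : (s + 1) ^ e <= 'C(s + e, e) * e`!.
  rewrite bin_ffact ffact_prod -[e in _ ^ e]card_ord -prod_nat_const.
  by apply: leq_prod => i _; have := ltn_ord i; lia.
apply: leq_trans (_ : 'C(s + e, e) * 2 ^ (s + e - e) * e`! <= _).
  by rewrite addnK mulnAC leq_mul2r ffact_ge orbT.
rewrite mulnC -mulnA leq_mul2l -expnD addnC bin_exp2_leq_exp3 ?orbT //.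
Qed.

Lemma exp3_dominates K e : exists s0, forall s, s0 <= s -> K * (s + 1) ^ e * 2 ^ s < 3 ^ s.
Proof.
pose D := e.+1`! * 3 ^ e.+1; exists (K * D) => s le_s.
have := poly_exp2_leq_exp3 e.+1 s; rewrite -/D expnSr => bound.
rewrite -(@ltn_pmul2r (s + 1)); last by rewrite addn1.
apply: (@leq_ltn_trans (K * (D * 3 ^ s))).
  rewrite [leqLHS](_ : _ = K * ((s + 1) ^ e * (s + 1) * 2 ^ s)); last by ring.
  by rewrite leq_mul2l bound orbT.
by rewrite mulnA mulnC ltn_pmul2l ?expn_gt0 // addn1 ltnS.
Qed.

Lemma log_size_bound K e : exists n0, forall n s, n0 <= n ->
  3 ^ s <= 2 ^ s * (2 * n) ^ e -> K * (s + 1) ^ e <= n.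
Proof.
have [s0 s0P] := exp3_dominates ((2 * K) ^ e) (e * e).
exists (K * (s0 + 1) ^ e) => n s le_n exp_le.
have [lt_s | le_s] := ltnP s s0.
  by apply: leq_trans le_n; rewrite leq_mul2l leq_expn2r ?orbT // leq_add2r ltnW.
rewrite leqNgt; apply/negP => lt_n.
have : (2 * n) ^ e <= (2 * K) ^ e * (s + 1) ^ (e * e).
  by rewrite expnM -expnMn -mulnA leq_expn2r // leq_mul2l ltnW.
rewrite -(leq_pmul2l (expn_gt0 2 s)) => /(leq_trans exp_le).
by rewrite mulnC leqNgt s0P.
Qed.

Lemma dfoS k : dfo k.+1 = (2 * k + 1) * dfo k.
Proof. by rewrite /dfo big_ord_recr /= mulnC. Qed.

Lemma dfo_subn1 k : 0 < k -> dfo k = (2 * k - 1) * dfo (k - 1).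
Proof.
by case: k => // k _; rewrite dfoS subSS subn0 (_ : 2 * k.+1 - 1 = 2 * k + 1) //; lia.
Qed.

Lemma dfo_gt0 k : 0 < dfo k.
Proof. by rewrite /dfo prodn_gt0 // => i; rewrite addn1. Qed.

Lemma dfo_cat k j : dfo (k + j) = dfo k * \prod_(k <= i < k + j) (2 * i + 1).
Proof.
rewrite /dfo -!(big_mkord xpredT (fun i => 2 * i + 1)).
by rewrite (big_cat_nat (leq0n k) (leq_addr j k)).
Qed.

Lemma leq_dfo k l : k <= l -> dfo k <= dfo l.
Proof.
by move/subnKC <-; rewrite dfo_cat leq_pmulr // prodn_gt0 // => i; rewrite addn1.
Qed.

Lemma dfo_leq_mul_exp k j : dfo (k + j) <= dfo k * (2 * (k + j)) ^ j.
Proof.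
rewrite dfo_cat leq_mul2l; apply/orP; right.
rewrite -[j in _ ^ j](addKn k) -prod_nat_const_nat big_nat_cond [leqRHS]big_nat_cond.
by apply: leq_prod => i /andP[/andP[_ lt_i] _]; lia.
Qed.

Lemma support_size_eventually_small M t : exists n0, forall n s, n0 <= n -> t < n ->
  dfo (n - t - 1) * 3 ^ s <= dfo n * 2 ^ s ->
  4 * s + 2 < n /\ M * (s ^ t.+1 + 1) <= 2 * (n - t) - 1.
Proof.
have [n0 n0P] := log_size_bound (M + 2 * t + 4) t.+1.
exists n0 => n s n0n tn le_s.
have : (M + 2 * t + 4) * (s + 1) ^ t.+1 <= n.
  apply: n0P => //; rewrite -(leq_pmul2l (dfo_gt0 (n - t - 1))).
  apply: leq_trans le_s _; rewrite mulnCA [leqLHS]mulnC leq_mul2l; apply/orP; right.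
  by have := dfo_leq_mul_exp (n - t - 1) t.+1; rewrite (_ : n - t - 1 + t.+1 = n) //; lia.
have := @leq_pexp2l (s + 1) 1 t.+1 (leq_addl s 1) (ltn0Sn _); rewrite expn1.
by have := leq_exp_addn1 s t; nia.
Qed.

Lemma card_bigcup_le (T I : finType) (P : {pred I}) (A : I -> {set T}) :
  #|\bigcup_(i in P) A i| <= \sum_(i in P) #|A i|.
Proof.
elim/big_ind2: _ => [|x1 y1 x2 y2 le1 le2|//]; first by rewrite cards0.
by apply: leq_trans (leq_card_setU _ _) (leq_add le1 le2).
Qed.

Lemma exists_subset_card (T : finType) (A : {set T}) k :
  k <= #|A| -> exists2 X : {set T}, X \subset A & #|X| = k.
Proof.
rewrite -bin_gt0 -cards_draws => /card_gt0P[X].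
by rewrite inE => /andP[sXA /eqP cX]; exists X.
Qed.

Lemma disjointDl (T : finType) (A B : {set T}) : [disjoint A :\: B & B].
Proof. by have := subxx (A :\: B); rewrite subsetD => /andP[]. Qed.

Lemma exists_notin_card_le (T : finType) (X Y B : {set T}) :
  #|X| <= #|Y| -> Y \subset B -> ~~ (X \subset B) -> exists2 y, y \in Y & y \notin X.
Proof.
move=> le_XY sYB nsXB; apply/exists_inP; apply: contraLR le_XY.
move=> /exists_inPn sYX; rewrite -ltnNge.
apply: leq_ltn_trans (_ : #|X :&: B| < _).
  apply/subset_leq_card/subsetP => y Yy.
  by rewrite inE (subsetP sYB) // andbT; apply/negPn/sYX.
by rewrite (ltn_leqif (subset_leqif_card (subsetIl X B))) subsetI subxx.
Qed.

Section Matchings.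

Variables (V : finType) (n : nat).
Hypothesis cardV : #|V| = 2 * n.
Local Notation edges := {set {set V}}.

Lemma disjoint_edgesS (X S : edges) : X \subset S -> disjoint_edges S -> disjoint_edges X.
Proof.
move=> sXS /andP[/forall_inP eS tS]; apply/andP; split; last exact: trivIsetS tS.
by apply/forall_inP => e /(subsetP sXS)/eS.
Qed.

Lemma pm_disjoint_edges (m : edges) : perfect_matching m -> disjoint_edges m.
Proof. by case/andP=> em /and3P[_ tm _]; apply/andP. Qed.

Lemma pm_cover (m : edges) : perfect_matching m -> cover m = setT.
Proof. by case/andP=> _ /and3P[/eqP]. Qed.

Lemma edge_card (S : edges) e : disjoint_edges S -> e \in S -> #|e| = 2.
Proof. by case/andP=> /forall_inP eS _ /eS/eqP. Qed.

Lemma card_cover_disjoint_edges (S : edges) : disjoint_edges S -> #|cover S| = 2 * #|S|.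
Proof.
move=> dS; have /andP[_ /eqP <-] := dS.
rewrite (eq_bigr (fun _ => 2)) => [|e /(edge_card dS) //].
by rewrite sum_nat_const mulnC.
Qed.

Lemma pm_card (m : edges) : perfect_matching m -> #|m| = n.
Proof.
move=> pm; have := card_cover_disjoint_edges (pm_disjoint_edges pm).
by rewrite pm_cover // cardsT cardV; lia.
Qed.

Lemma pm_partner (m : edges) v : perfect_matching m ->
  exists2 w, w != v & [set v; w] \in m.
Proof.
move=> pm; have vm : v \in cover m by rewrite (pm_cover pm) inE.
have /eqP/cards2P[x [y [xy Exy]]] := edge_card (pm_disjoint_edges pm) (pblock_mem vm).
have := mem_pblock m v; rewrite vm Exy !inE => /orP[]/eqP Ev.
  by exists y; rewrite Ev 1?eq_sym // -Exy pblock_mem.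
by exists x; rewrite Ev // setUC -Exy pblock_mem.
Qed.

Lemma pm_block_eq (m : edges) B1 B2 x : perfect_matching m -> B1 \in m -> B2 \in m ->
  x \in B1 -> x \in B2 -> B1 = B2.
Proof.
case/andP=> _ /and3P[_ tm _] mB1 mB2 B1x B2x.
by rewrite -(def_pblock tm mB1 B1x) (def_pblock tm mB2 B2x).
Qed.

Definition pmatchings (S : edges) : {set edges} :=
  [set m | perfect_matching m & S \subset m].

Lemma pmatchings_sub_partner (S : edges) v : v \notin cover S ->
  pmatchings S \subset \bigcup_(w in ~: cover S :\ v) pmatchings ([set v; w] |: S).
Proof.
move=> vS; apply/subsetP => m; rewrite inE => /andP[pm sSm].
have [w wv vw_m] := pm_partner v pm.
apply/bigcupP; exists w; last by rewrite inE pm subUset sub1set vw_m sSm.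
rewrite !inE wv /=; apply/bigcupP => -[B SB wB].
have EB : [set v; w] = B.
  by apply: (pm_block_eq pm vw_m (subsetP sSm _ SB) _ wB); rewrite !inE eqxx orbT.
by case/negP: vS; apply/bigcupP; exists B; rewrite // -EB !inE eqxx.
Qed.

Lemma card_pmatchings_le_dfo k (S : edges) : #|S| + k = n -> #|pmatchings S| <= dfo k.
Proof.
elim: k S => [|k IHk] S cS.
  rewrite /dfo big_ord0 -(cards1 S) subset_leq_card //; apply/subsetP => m.
  rewrite !inE => /andP[pm sSm]; rewrite eq_sym eqEcard sSm (pm_card pm); lia.
have [-> | [m0]] := set_0Vmem (pmatchings S); first by rewrite cards0.
rewrite inE => /andP[pm0 sSm0].
have dS := disjoint_edgesS sSm0 (pm_disjoint_edges pm0).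
have : 0 < #|~: cover S| by rewrite cardsCs setCK card_cover_disjoint_edges // cardV; lia.
case/card_gt0P=> v; rewrite inE => vS.
apply: leq_trans (subset_leq_card (pmatchings_sub_partner vS)) _.
apply: leq_trans (card_bigcup_le _ _) _.
have cW : #|~: cover S :\ v| = 2 * k + 1.
  move: (cardsD1 v (~: cover S)); rewrite inE vS cardsCs setCK.
  by rewrite card_cover_disjoint_edges // cardV; lia.
rewrite dfoS -cW -sum_nat_const; apply: leq_sum => w _; apply: IHk.
have vwS : [set v; w] \notin S.
  by apply: contra vS => vwS; apply/bigcupP; exists [set v; w]; rewrite ?set21.
by rewrite cardsU1 vwS; lia.
Qed.

Lemma card_pmatchings_le (S : edges) : #|pmatchings S| <= dfo (n - #|S|).
Proof.
have [le_Sn | lt_nS] := leqP #|S| n; first by apply: card_pmatchings_le_dfo; lia.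
suff -> : pmatchings S = set0 by rewrite cards0.
apply/setP => m; rewrite !inE; apply/negP => /andP[pm /subset_leq_card].
by rewrite (pm_card pm) leqNgt lt_nS.
Qed.

Lemma restrict_sub_pmatchings (G : {set edges}) S :
  (forall m, m \in G -> perfect_matching m) -> restrict G S \subset pmatchings S.
Proof. by move=> pmG; apply/subsetP => m; rewrite !inE => /andP[/pmG -> ->]. Qed.

Definition spread (A : {set edges}) (S : edges) :=
  forall e, e \notin S -> 2 * (2 * (n - #|S|) - 1) * #|[set a in A | e \in a]| <= 3 * #|A|.

Definition weight s := 2 ^ s * 3 ^ (n - s) * \prod_(n - s <= i < n) (2 * i + 1).

(* [potential G S] is [3 ^ n * dfo n] times [(2/3) ^ #|S|] times the density of
   [restrict G S] among the [dfo (n - #|S|)] perfect matchings through [S]. *)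
Definition potential (G : {set edges}) S := #|restrict G S| * weight #|S|.

Lemma weight_gt0 s : 0 < weight s.
Proof. by rewrite /weight !muln_gt0 !expn_gt0 prodn_gt0 // => i; rewrite addn1. Qed.

Lemma weight0 : weight 0 = 3 ^ n.
Proof. by rewrite /weight subn0 big_geq // muln1 mul1n. Qed.

Lemma weightS s : s < n -> 3 * weight s.+1 = 2 * (2 * (n - s) - 1) * weight s.
Proof.
move=> lt_sn; rewrite /weight big_ltn ?subnSK //; last by lia.
have -> : 3 ^ (n - s) = 3 * 3 ^ (n - s.+1) by rewrite -expnS subnSK.
rewrite expnS (_ : 2 * (n - s.+1) + 1 = 2 * (n - s) - 1); last by lia.
ring.
Qed.

Lemma dfo_mul_weight s : s <= n -> dfo (n - s) * weight s = dfo n * 2 ^ s * 3 ^ (n - s).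
Proof.
move=> le_sn; rewrite /weight -[dfo n](congr1 dfo (subnK le_sn)) dfo_cat subnK //.
ring.
Qed.

Lemma potential_max_spread (G : {set edges}) S :
  (forall m, m \in G -> perfect_matching m) ->
  (forall S', potential G S' <= potential G S) -> spread (restrict G S) S.
Proof.
move=> pmG maxS e eS; set Ae := [set a in restrict G S | e \in a].
have [-> | [a]] := set_0Vmem Ae; first by rewrite cards0 muln0.
rewrite !inE => /andP[/andP[aG sSa] ea].
have cS' : #|e |: S| = #|S|.+1 by rewrite cardsU1 eS.
have lt_Sn : #|S| < n.
  rewrite -(pm_card (pmG a aG)) -cS'.
  by apply: subset_leq_card; rewrite subUset sub1set ea sSa.
have restrictS' : restrict G (e |: S) = Ae.
  by apply/setP => m; rewrite !inE subUset sub1set andbA andbAC.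
have := maxS (e |: S); rewrite /potential restrictS' cS' => le_pot.
rewrite -(leq_pmul2r (weight_gt0 #|S|)); apply: (@leq_trans (3 * (#|Ae| * weight #|S|.+1))).
  by rewrite [leqRHS]mulnCA weightS //; apply: eq_leq; ring.
by rewrite -mulnA leq_mul2l le_pot orbT.
Qed.

Lemma exists_spread_restriction (G : {set edges}) :
  (forall m, m \in G -> perfect_matching m) -> 0 < #|G| -> exists S : edges,
  [/\ 0 < #|restrict G S|, spread (restrict G S) S & #|G| * 3 ^ #|S| <= dfo n * 2 ^ #|S|].
Proof.
move=> pmG G_gt0; have [S _ maxS] := @arg_maxnP _ set0 xpredT (potential G) isT.
have pot0 : potential G set0 = #|G| * 3 ^ n.
  rewrite /potential cards0 weight0; congr (_ * _); apply: eq_card => m.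
  by rewrite inE sub0set andbT.
have le_pot : #|G| * 3 ^ n <= potential G S by rewrite -pot0; exact: maxS.
have restrict_gt0 : 0 < #|restrict G S|.
  rewrite lt0n; apply: contraTneq le_pot; rewrite /potential => ->.
  by rewrite -ltnNge muln_gt0 G_gt0 expn_gt0.
have le_Sn : #|S| <= n.
  have /card_gt0P[a] := restrict_gt0; rewrite inE => /andP[/pmG pm /subset_leq_card].
  by rewrite (pm_card pm).
exists S; split=> //; first by apply: potential_max_spread => // S'; exact: maxS.
rewrite -(leq_pmul2r (expn_gt0 3 (n - #|S|))) -mulnA -expnD subnKC //.
apply: leq_trans le_pot _; rewrite /potential -dfo_mul_weight // leq_mul2r.
apply/orP; right; apply: leq_trans (card_pmatchings_le S).
exact/subset_leq_card/restrict_sub_pmatchings.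
Qed.

Definition spread_piece (G : {set edges}) L (S : edges) :=
  exists2 A : {set edges}, A \subset restrict G S &
    [/\ 0 < #|A|, spread A S & L * 3 ^ #|S| <= dfo n * 2 ^ #|S|].

Definition uncovered (G : {set edges}) (Sc : {set edges}) :=
  [set m in G | [forall S in Sc, ~~ (S \subset m)]].

Lemma spread_pieceS (G G' : {set edges}) L S :
  G' \subset G -> spread_piece G' L S -> spread_piece G L S.
Proof.
move=> sGG' [A sA pA]; exists A => //; apply: subset_trans sA _.
by apply/subsetP => m; rewrite !inE => /andP[/(subsetP sGG') -> ->].
Qed.

Lemma spread_approximation (G : {set edges}) L :
  (forall m, m \in G -> perfect_matching m) -> 0 < L -> exists Sc : {set edges},
  (forall S, S \in Sc -> spread_piece G L S) /\ #|uncovered G Sc| < L.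
Proof.
move=> pmG L_gt0; move: {2}#|G| (erefl #|G|) => k.
elim/ltn_ind: k G pmG => k IHk G pmG cG.
have [lt_GL | le_LG] := ltnP #|G| L.
  exists set0; split=> [S|]; first by rewrite inE.
  by apply: leq_ltn_trans lt_GL; apply/subset_leq_card/subsetP => m; rewrite inE => /andP[].
have [S [A_gt0 spA GS]] := exists_spread_restriction pmG (leq_trans L_gt0 le_LG).
have sG'G : G :\: restrict G S \subset G by apply: subsetDl.
have pmG' m : m \in G :\: restrict G S -> perfect_matching m.
  by move/(subsetP sG'G); apply: pmG.
have sAG : restrict G S \subset G by apply/subsetP => m; rewrite inE => /andP[].
have cG' : #|G :\: restrict G S| < k.
  by rewrite cardsD (setIidPr sAG); move: A_gt0 cG; lia.
have [Sc [pieceSc uncSc]] := IHk _ cG' _ pmG' (erefl _).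
exists (S |: Sc); split=> [S' |].
  case/setU1P=> [-> | /pieceSc]; last exact: spread_pieceS.
  exists (restrict G S) => //; split=> //.
  by apply: leq_trans GS; rewrite leq_mul2r le_LG orbT.
apply: leq_ltn_trans uncSc; apply/subset_leq_card/subsetP => m.
rewrite !inE => /andP[mG /forall_inP unc]; have := unc S (setU11 S Sc).
rewrite mG /= => nSm; rewrite nSm /=; apply/forall_inP => S' ScS'.
by apply: unc; rewrite inE ScS' orbT.
Qed.

Lemma spread_transversal_large (A : {set edges}) S (E : edges) :
  spread A S -> 0 < #|A| -> [disjoint E & S] ->
  (forall a, a \in A -> exists2 e, e \in E & e \in a) ->
  2 * (2 * (n - #|S|) - 1) <= 3 * #|E|.
Proof.
move=> spA A_gt0 dES hitA; rewrite -(leq_pmul2r A_gt0).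
have cover_A : #|A| <= \sum_(e in E) #|[set a in A | e \in a]|.
  apply: leq_trans (card_bigcup_le _ _); apply/subset_leq_card/subsetP => a aA.
  by have [e eE ea] := hitA a aA; apply/bigcupP; exists e; rewrite // inE aA.
rewrite (leq_trans (leq_mul (leqnn _) cover_A)) // big_distrr /=.
apply: leq_trans (_ : _ <= \sum_(e in E) 3 * #|A|) _.
  by apply: leq_sum => e eE; apply: spA; rewrite (disjointFr dES eE).
by rewrite sum_nat_const mulnCA mulnA.
Qed.

Lemma spread_supports_intersect t (A B : {set edges}) S1 S2 :
  (forall a, a \in A -> perfect_matching a) ->
  (forall a b, a \in A -> b \in B -> t <= #|a :&: b|) ->
  spread A S1 -> spread B S2 -> 0 < #|A| -> 0 < #|B| ->
  4 * #|S1| + 2 < n -> 4 * #|S2| + 2 < n -> t <= #|S1 :&: S2|.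
Proof.
move=> pmA tAB spA spB A_gt0 B_gt0 small1 small2; rewrite leqNgt; apply/negP => lt_t.
have [a aA a_avoids] : exists2 a, a \in A & [disjoint S2 :\: S1 & a].
  apply/exists_inP; apply: contraT => /exists_inPn noa; exfalso.
  have hit_A a' : a' \in A -> exists2 e, e \in S2 :\: S1 & e \in a'.
    by move/noa; rewrite -setI_eq0 => /set0Pn[e /setIP[]]; exists e.
  have := spread_transversal_large spA A_gt0 (disjointDl _ _) hit_A.
  by have := subset_leq_card (subsetDl S2 S1); lia.
have hit_B b : b \in B -> exists2 e, e \in a :\: S2 & e \in b.
  move=> bB; apply/exists_inP; apply: contraT => /exists_inPn b_avoids; exfalso.
  have /subset_leq_card : a :&: b \subset S1 :&: S2.
    apply/subsetP => e; rewrite !inE => /andP[ea eb].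
    have eS2 : e \in S2 by apply: contraLR eb => eS2; apply: b_avoids; rewrite inE eS2 ea.
    rewrite eS2 andbT; apply: contraLR a_avoids => eS1.
    by rewrite -setI_eq0; apply/set0Pn; exists e; rewrite !inE eS1 eS2 ea.
  by have := tAB a b aA bB; lia.
have := spread_transversal_large spB B_gt0 (disjointDl _ _) hit_B.
by have := subset_leq_card (subsetDl a S2); rewrite (pm_card (pmA a aA)); lia.
Qed.

Lemma card_union_pmatchings_le (Sc : {set edges}) t s :
  (forall S, S \in Sc -> disjoint_edges S) -> (forall S, S \in Sc -> #|S| <= s) ->
  (forall S S', S \in Sc -> S' \in Sc -> t <= #|S :&: S'|) ->
  (forall X, disjoint_edges X -> #|X| = t -> exists2 S, S \in Sc & ~~ (X \subset S)) ->
  #|\bigcup_(S in Sc) pmatchings S| <= s ^ t.+1 * dfo (n - t - 1).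
Proof.
move=> dSc sizeSc interSc nocore.
have [-> | [S1 S1c]] := set_0Vmem Sc; first by rewrite big_set0 cards0.
pose cores := [set X : edges | X \subset S1 & #|X| == t].
pose other (X : edges) := odflt set0 [pick S in Sc | ~~ (X \subset S)].
have otherP X : X \in cores -> other X \in Sc /\ ~~ (X \subset other X).
  rewrite inE => /andP[sXS1 /eqP cX]; rewrite /other; case: pickP => [S /andP[] // | none].
  have [S ScS nXS] := nocore X (disjoint_edgesS sXS1 (dSc S1 S1c)) cX.
  by have := none S; rewrite ScS nXS.
have cover : \bigcup_(S in Sc) pmatchings S \subset
    \bigcup_(X in cores) \bigcup_(f in other X :\: X) pmatchings (f |: X).
  apply/subsetP => m /bigcupP[S ScS]; rewrite inE => /andP[pm sSm].
  have [X sX cX] := exists_subset_card (interSc S S1 ScS S1c).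
  have /subsetIP[sXS sXS1] := sX.
  have coreX : X \in cores by rewrite inE sXS1 cX eqxx.
  have [otherSc nXother] := otherP X coreX.
  have [f /setIP[fS f_other] fX] := exists_notin_card_le
    (leq_trans (eq_leq cX) (interSc S _ ScS otherSc)) (subsetIr _ _) nXother.
  apply/bigcupP; exists X => //; apply/bigcupP; exists f; first by rewrite inE fX.
  by rewrite inE pm subUset sub1set (subsetP sSm) // (subset_trans sXS sSm).
apply: leq_trans (subset_leq_card cover) _; apply: leq_trans (card_bigcup_le _ _) _.
apply: leq_trans (_ : _ <= \sum_(X in cores) s * dfo (n - t - 1)) _.
  apply: leq_sum => X coreX; apply: leq_trans (card_bigcup_le _ _) _.
  apply: leq_trans (_ : _ <= \sum_(f in other X :\: X) dfo (n - t - 1)) _.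
    apply: leq_sum => f; rewrite inE => /andP[fX _].
    apply: leq_trans (card_pmatchings_le _) _.
    by move: coreX; rewrite inE cardsU1 fX => /andP[_ /eqP ->]; rewrite subnDA subnAC.
  rewrite sum_nat_const leq_mul2r (leq_trans (subset_leq_card (subsetDl _ _))) ?orbT //.
  exact: sizeSc (otherP X coreX).1.
rewrite sum_nat_const cards_draws expnSr -mulnA leq_mul2r; apply/orP; right.
apply: leq_trans (bin_leq_exp _ _) _; exact: leq_expn2r (sizeSc S1 S1c).
Qed.

Lemma uncovered_cover (F Sc : {set edges}) :
  (forall m, m \in F -> perfect_matching m) ->
  F \subset uncovered F Sc :|: \bigcup_(S in Sc) pmatchings S.
Proof.
move=> pmF; apply/subsetP => m mF; rewrite !inE mF /=.
case: forall_inP => //= /forall_inP/forall_inPn[S ScS /negPn sSm].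
by apply/bigcupP; exists S; rewrite // inE pmF.
Qed.

Lemma restrict_core_uncovered (F Sc : {set edges}) (X : edges) :
  (forall S, S \in Sc -> X \subset S) -> F :\: restrict F X \subset uncovered F Sc.
Proof.
move=> coreX; apply/subsetP => m; rewrite !inE => /andP[nXm mF].
rewrite mF /= in nXm *; apply/forall_inP => S /coreX sXS.
by apply: contra nXm; apply: subset_trans.
Qed.

Lemma tintersecting_core_or_small (F : {set edges}) t (L := dfo (n - t - 1)) :
  (forall m, m \in F -> perfect_matching m) -> t_intersecting t F ->
  (forall s, L * 3 ^ s <= dfo n * 2 ^ s -> 4 * s + 2 < n) ->
  (exists T, [/\ disjoint_edges T, #|T| = t & #|F :\: restrict F T| < L]) \/
  exists2 s, L * 3 ^ s <= dfo n * 2 ^ s & #|F| < (s ^ t.+1 + 1) * L.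
Proof.
move=> pmF tF small; have L_gt0 : 0 < L := dfo_gt0 _.
have [Sc [pieceSc uncSc]] := spread_approximation pmF L_gt0.
have sub_pm (S : edges) (A : {set edges}) :
    A \subset restrict F S -> forall a, a \in A -> a \in F /\ S \subset a.
  by move=> sA a /(subsetP sA); rewrite inE => /andP[].
have dSc S : S \in Sc -> disjoint_edges S.
  case/pieceSc => A sA [/card_gt0P[a aA] _ _]; have [aF sSa] := sub_pm _ _ sA a aA.
  exact: disjoint_edgesS sSa (pm_disjoint_edges (pmF a aF)).
have interSc S S' : S \in Sc -> S' \in Sc -> t <= #|S :&: S'|.
  case/pieceSc => A sA [A_gt0 spA /small sizeS] /pieceSc[B sB [B_gt0 spB /small sizeS']].
  apply: (spread_supports_intersect _ _ spA spB) => // [a /(sub_pm _ _ sA)[/pmF] //|a b].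
  move=> /(sub_pm _ _ sA)[aF _] /(sub_pm _ _ sB)[bF _].
  by move/forall_inP: tF => /(_ a aF)/forall_inP; apply.
case: (boolP [exists X, [&& disjoint_edges X, #|X| == t & [forall S in Sc, X \subset S]]]).
  case/existsP=> X /and3P[dX /eqP cX /forall_inP coreX]; left; exists X; split=> //.
  exact: leq_ltn_trans (subset_leq_card (restrict_core_uncovered _ coreX)) uncSc.
move=> nocore; right; set s := \max_(S in Sc) #|S|; exists s.
  apply: (big_ind (fun s => L * 3 ^ s <= dfo n * 2 ^ s)) => [|x y|S /pieceSc[A _ []] //].
    by rewrite !expn0 !muln1 leq_dfo // -subnDA leq_subr.
  by rewrite /maxn; case: ifP.
have sizeSc S : S \in Sc -> #|S| <= s by apply: leq_bigmax_cond.
have noc X : disjoint_edges X -> #|X| = t -> exists2 S, S \in Sc & ~~ (X \subset S).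
  move=> dX cX; apply/forall_inPn; apply: contra nocore => coreX.
  by apply/existsP; exists X; rewrite dX cX eqxx.
have := card_union_pmatchings_le dSc sizeSc interSc noc; rewrite -/L.
have := leq_trans (subset_leq_card (uncovered_cover Sc pmF)) (leq_card_setU _ _).
by move: uncSc; rewrite mulnDl mul1n; lia.
Qed.

End Matchings.

Import Order.TTheory GRing.Theory Num.Theory.
Local Open Scope ring_scope.

Lemma ltr_nat_scaled (R : numDomainType) (c : R) (M x k L : nat) :
  0 < c -> 1 < c * M%:R -> (M * x <= k)%N -> (0 < x)%N -> (0 < L)%N ->
  (x * L)%:R < c * (k * L)%:R.
Proof.
move=> c_gt0 cM le_k x_gt0 L_gt0; rewrite !natrM mulrA ltr_pM2r ?ltr0n //.
apply: lt_le_trans (_ : x%:R < c * (M * x)%:R) _.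
  by rewrite natrM mulrA ltr_pMl ?ltr0n.
by rewrite ler_pM2l // ler_nat.
Qed.

Theorem mainTheorem14 (R : realType) (c : R) (t : nat) :
  0 < c < 1 ->
  exists (n0 : nat) (C : R), 0 < C /\
    forall n : nat, (n0 <= n)%N ->
    forall F : {set {set {set 'I_(2 * n)}}},
      (forall m, m \in F -> perfect_matching m) ->
      t_intersecting t F ->
      c * (dfo (n - t))%:R <= (#|F|)%:R ->
      exists T : {set {set 'I_(2 * n)}},
        [/\ disjoint_edges T, #|T| = t &
            (#|F :\: restrict F T|)%:R <= C * (dfo (n - t - 1))%:R].
Proof.
case/andP=> c_gt0 _.
have [M cM] : exists M : nat, 1 < c * M%:R.
  exists (Num.Def.archi_bound c^-1); rewrite -ltr_pdivrMl // mulr1.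
  by apply/archi_boundP/ltW; rewrite invr_gt0.
have [n0 n0P] := support_size_eventually_small M t.
exists (maxn n0 t.+1), 1; split=> // n; rewrite geq_max => /andP[n0n tn] F pmF tF cF.
have [[T [dT cT FT]] | [s /(n0P n s n0n tn)[_ sK] Fs]] := tintersecting_core_or_small
    (card_ord _) pmF tF (fun s le_s => (n0P n s n0n tn le_s).1).
  by exists T; split=> //; rewrite mul1r ler_nat ltnW.
have := ltr_nat_scaled c_gt0 cM sK (leq_addl _ 1) (dfo_gt0 (n - t - 1)).
rewrite -dfo_subn1 ?subn_gt0 //; move: Fs; rewrite -(ltr_nat R) => Fs /(lt_trans Fs).
by move/(le_lt_trans cF); rewrite ltxx.
Qed.
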